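(* For every integer $i\ge 2$, $\overline{\alpha}(\{1,3,2i\})=\frac{i}{2i+3}$.
   Context: For a finite set $S$ of positive integers, the distance graph $G(S)$ has vertex set $\mathbb{Z}$, with $i,j$ adjacent iff $|i-j|\in S$. The density of $A\subseteq\mathbb{Z}$ is $\delta(A)=\limsup_{N\to\infty}\frac{|A\cap[-N,N]|}{2N+1}$, and the independence ratio $\overline{\alpha}(S)$ is the supremum of $\delta(A)$ over independent sets $A$ of $G(S)$. *)

From Stdlib Require Import Reals ZArith List ClassicalEpsilon.
From Coquelicot Require Import Coquelicot.
Open Scope R_scope.

(* Distance graph G(S) on Z, S given as a finite list of positive integers:
   i, j adjacent iff |i - j| is in S. *)
Definition independent (S : list Z) (A : Z -> Prop) : Prop :=
  forall x y : Z, A x -> A y -> ~ In (Z.abs (x - y)) S.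

Definition count_in (A : Z -> Prop) (N : nat) : nat :=
  fold_right (fun k acc =>
      (if excluded_middle_informative (A k) then 1 else 0) + acc)%nat
    0%nat
    (map (fun m => (Z.of_nat m - Z.of_nat N)%Z) (seq 0 (2 * N + 1))).

Definition density (A : Z -> Prop) : Rbar :=
  LimSup_seq (fun N => INR (count_in A N) / INR (2 * N + 1)).

Definition indep_ratio (S : list Z) : Rbar :=
  Lub_Rbar (fun r => exists A, independent S A /\ density A = Finite r).

From Stdlib Require Import Reals ZArith List Lia Lra ClassicalEpsilon.
From Coquelicot Require Import Coquelicot.
Open Scope R_scope.

(* Upper bound: an independent set has no two elements at distance 1 or 3, so
   among 2k+2 consecutive integers it has at most k+1 elements, and it has k+1
   only if it is one full parity class there; together with the forbidden
   distance 2n this gives at most n elements in any 2n+3 consecutive integers,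
   hence density at most n/(2n+3).  Lower bound: the (2n+3)-periodic set of
   residues {0, 2, ..., 2n-2} is independent and has density n/(2n+3). *)

Definition indicator (A : Z -> Prop) (x : Z) : nat :=
  if excluded_middle_informative (A x) then 1%nat else 0%nat.

Fixpoint count_from (A : Z -> Prop) (a : Z) (m : nat) : nat :=
  match m with
  | O => O
  | S m' => (indicator A a + count_from A (a + 1) m')%nat
  end.

Definition avoids (A : Z -> Prop) (d : Z) : Prop := forall x, A x -> ~ A (x + d)%Z.

Lemma indicator_in A x : A x -> indicator A x = 1%nat.
Proof. unfold indicator; destruct excluded_middle_informative; tauto. Qed.

Lemma indicator_notin A x : ~ A x -> indicator A x = 0%nat.
Proof. unfold indicator; destruct excluded_middle_informative; tauto. Qed.

Lemma indicator_le_1 A x : (indicator A x <= 1)%nat.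
Proof. unfold indicator; destruct excluded_middle_informative; lia. Qed.

Lemma indicator_iff A x y : (A x <-> A y) -> indicator A x = indicator A y.
Proof. unfold indicator; do 2 destruct excluded_middle_informative; tauto. Qed.

Lemma count_in_count_from A N : count_in A N = count_from A (- Z.of_nat N) (2 * N + 1).
Proof.
  unfold count_in.
  enough (Hseq : forall m s, fold_right (fun k acc =>
      (if excluded_middle_informative (A k) then 1 else 0) + acc)%nat 0%nat
      (map (fun m => (Z.of_nat m - Z.of_nat N)%Z) (seq s m))
      = count_from A (Z.of_nat s - Z.of_nat N) m) by exact (Hseq _ 0%nat).
  induction m as [|m IH]; intros s; cbn; [reflexivity|].
  rewrite IH. unfold indicator. do 2 f_equal. lia.
Qed.

Lemma count_from_add A m k a :
  count_from A a (m + k) = (count_from A a m + count_from A (a + Z.of_nat m) k)%nat.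
Proof.
  revert a; induction m as [|m IH]; intros a; cbn [count_from Nat.add].
  - now rewrite Z.add_0_r.
  - rewrite IH, Nat.add_assoc. do 2 f_equal. lia.
Qed.

Lemma count_from_le A a m : (count_from A a m <= m)%nat.
Proof.
  revert a; induction m as [|m IH]; intros a; cbn [count_from]; [lia|].
  pose proof (indicator_le_1 A a); specialize (IH (a + 1)%Z); lia.
Qed.

Lemma independent_avoids S A d : independent S A -> In d S -> (0 <= d)%Z -> avoids A d.
Proof.
  intros HA Hd Hd0 x Hx Hxd. apply (HA _ _ Hx Hxd).
  replace (Z.abs (x - (x + d))) with d by lia. exact Hd.
Qed.

Section AvoidOne.

Variable A : Z -> Prop.
Hypothesis avoid1 : avoids A 1.

Lemma count_from_avoid1_le m a : (2 * count_from A a m <= m + 1)%nat.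
Proof.
  revert a; induction m as [m IH] using lt_wf_ind; intros a.
  destruct m as [|[|m]]; cbn [count_from]; [lia| pose proof (indicator_le_1 A a); lia|].
  destruct (classic (A a)) as [Ha|Ha].
  - rewrite (indicator_in _ _ Ha), (indicator_notin A (a + 1)) by exact (avoid1 a Ha).
    specialize (IH m ltac:(lia) (a + 1 + 1)%Z); lia.
  - rewrite (indicator_notin _ _ Ha).
    specialize (IH (S m) ltac:(lia) (a + 1)%Z); cbn [count_from] in IH; lia.
Qed.

Lemma count_from_avoid1_eq m a : (2 * count_from A a m = m + 1)%nat ->
  forall j, (2 * j < m)%nat -> A (a + 2 * Z.of_nat j)%Z.
Proof.
  revert a; induction m as [m IH] using lt_wf_ind; intros a Hc j Hj.
  destruct m as [|m]; cbn [count_from] in Hc; [lia|].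
  destruct (classic (A a)) as [Ha|Ha].
  - destruct j as [|j]; [rewrite Z.add_0_r; exact Ha|].
    destruct m as [|m]; [lia|].
    rewrite (indicator_in _ _ Ha) in Hc. cbn [count_from] in Hc.
    rewrite (indicator_notin A (a + 1)) in Hc by exact (avoid1 a Ha).
    replace (a + 2 * Z.of_nat (S j))%Z with (a + 1 + 1 + 2 * Z.of_nat j)%Z by lia.
    apply (IH m); lia.
  - rewrite (indicator_notin _ _ Ha) in Hc.
    pose proof (count_from_avoid1_le m (a + 1)); lia.
Qed.

Hypothesis avoid3 : avoids A 3.

(* A half-full interval cannot switch from even to odd positions: the
   switch would be a gap of 1 or 3. *)
Lemma count_from_avoid13_half m a : (2 * count_from A a m = m)%nat ->
  (forall j, (2 * j + 2 <= m)%nat -> A (a + 2 * Z.of_nat j)%Z) \/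
  (forall j, (2 * j + 2 <= m)%nat -> A (a + 1 + 2 * Z.of_nat j)%Z).
Proof.
  revert a; induction m as [m IH] using lt_wf_ind; intros a Hc.
  destruct m as [|m]; cbn [count_from] in Hc; [left; lia|].
  destruct (classic (A a)) as [Ha|Ha].
  - left. intros [|j] Hj; [rewrite Z.add_0_r; exact Ha|].
    destruct m as [|m]; [lia|].
    rewrite (indicator_in _ _ Ha) in Hc. cbn [count_from] in Hc.
    rewrite (indicator_notin A (a + 1)) in Hc by exact (avoid1 a Ha).
    replace (a + 2 * Z.of_nat (S j))%Z with (a + 1 + 1 + 2 * Z.of_nat j)%Z by lia.
    destruct (IH m ltac:(lia) (a + 1 + 1)%Z ltac:(lia)) as [Heven|Hodd]; [apply Heven; lia|].
    exfalso. apply (avoid3 a Ha).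
    replace (a + 3)%Z with (a + 1 + 1 + 1 + 2 * Z.of_nat 0)%Z by lia. apply Hodd; lia.
  - rewrite (indicator_notin _ _ Ha) in Hc. right. intros j Hj.
    apply (count_from_avoid1_eq m); lia.
Qed.

End AvoidOne.

Section Window.

Variables (A : Z -> Prop) (n : nat).
Hypothesis n_ge2 : (2 <= n)%nat.
Hypothesis avoid1 : avoids A 1.
Hypothesis avoid3 : avoids A 3.
Hypothesis avoid2n : avoids A (2 * Z.of_nat n).

Lemma count_window_even a : (count_from A a (2 * n + 2) <= n)%nat.
Proof.
  pose proof (count_from_avoid1_le A avoid1 (2 * n + 2) a).
  destruct (Nat.eq_dec (count_from A a (2 * n + 2)) (S n)) as [Hc|Hc]; [|lia].
  assert (Hclass : exists b, forall j, (j <= n)%nat -> A (b + 2 * Z.of_nat j)%Z).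
  { destruct (count_from_avoid13_half A avoid1 avoid3 (2 * n + 2) a ltac:(lia))
      as [Heven|Hodd]; [exists a | exists (a + 1)%Z]; intros j Hj;
      [apply Heven | apply Hodd]; lia. }
  destruct Hclass as [b Hb]. exfalso. apply (avoid2n b).
  - rewrite <- (Z.add_0_r b). apply (Hb 0%nat); lia.
  - apply Hb; lia.
Qed.

(* The two ends exclude a+1, a+2, a+3, a+2n, a+2n+1, leaving at most n-2
   elements strictly between a+3 and a+2n. *)
Lemma count_window_ends a : A a -> A (a + 2 * Z.of_nat n + 2)%Z ->
  (count_from A a (2 * n + 3) <= n)%nat.
Proof.
  intros Ha Hlast.
  assert (Hgap : forall x, (x = a + 1 \/ x = a + 2 \/ x = a + 3 \/
                            x = a + 2 * Z.of_nat n \/ x = a + 2 * Z.of_nat n + 1)%Z ->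
                 indicator A x = 0%nat).
  { intros x Hx; apply indicator_notin; intros HAx.
    destruct Hx as [ -> | [ -> | [ -> | [ -> | -> ]]]].
    - exact (avoid1 a Ha HAx).
    - apply (avoid2n _ HAx). now replace (a + 2 + 2 * Z.of_nat n)%Z
        with (a + 2 * Z.of_nat n + 2)%Z by lia.
    - exact (avoid3 a Ha HAx).
    - exact (avoid2n a Ha HAx).
    - apply (avoid1 _ HAx). now replace (a + 2 * Z.of_nat n + 1 + 1)%Z
        with (a + 2 * Z.of_nat n + 2)%Z by lia. }
  replace (2 * n + 3)%nat with (4 + ((2 * n - 4) + 3))%nat by lia.
  rewrite !count_from_add.
  set (b := (a + Z.of_nat 4 + Z.of_nat (2 * n - 4))%Z).
  pose proof (count_from_avoid1_le A avoid1 (2 * n - 4) (a + Z.of_nat 4)) as Hmiddle.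
  set (middle := count_from A (a + Z.of_nat 4) (2 * n - 4)) in *.
  cbn [count_from].
  rewrite (Hgap (a + 1)%Z), (Hgap (a + 1 + 1)%Z), (Hgap (a + 1 + 1 + 1)%Z),
    (Hgap b), (Hgap (b + 1)%Z) by (unfold b; lia).
  pose proof (indicator_le_1 A a); pose proof (indicator_le_1 A (b + 1 + 1)); lia.
Qed.

Lemma count_window a : (count_from A a (2 * n + 3) <= n)%nat.
Proof.
  destruct (classic (A a)) as [Ha|Ha].
  - destruct (classic (A (a + 2 * Z.of_nat n + 2)%Z)) as [Hlast|Hlast].
    + exact (count_window_ends a Ha Hlast).
    + replace (2 * n + 3)%nat with (2 * n + 2 + 1)%nat by lia.
      rewrite count_from_add. cbn [count_from].
      rewrite (indicator_notin A) by (now replace (a + Z.of_nat (2 * n + 2))%Z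
        with (a + 2 * Z.of_nat n + 2)%Z by lia).
      pose proof (count_window_even a); lia.
  - replace (2 * n + 3)%nat with (S (2 * n + 2)) by lia.
    cbn [count_from]. rewrite (indicator_notin _ _ Ha).
    exact (count_window_even (a + 1)).
Qed.

End Window.

Lemma count_from_windows_le A p c : (forall a, (count_from A a p <= c)%nat) ->
  forall q r a, (count_from A a (q * p + r) <= q * c + r)%nat.
Proof.
  intros Hwin q; induction q as [|q IH]; intros r a; [apply count_from_le|].
  replace (S q * p + r)%nat with (p + (q * p + r))%nat by lia.
  rewrite count_from_add. specialize (Hwin a). specialize (IH r (a + Z.of_nat p)%Z). lia.
Qed.

Section Periodic.

Variables (A : Z -> Prop) (p : nat).
Hypothesis A_periodic : forall x, A (x + Z.of_nat p)%Z <-> A x.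

Lemma count_from_periodic_succ a : count_from A (a + 1) p = count_from A a p.
Proof.
  pose proof (count_from_add A p 1 a) as Hsplit.
  rewrite Nat.add_1_r in Hsplit. cbn [count_from] in Hsplit.
  rewrite (indicator_iff _ _ _ (A_periodic a)) in Hsplit. lia.
Qed.

Lemma count_from_periodic a : count_from A a p = count_from A 0 p.
Proof.
  assert (Hpos : forall k, count_from A (Z.of_nat k) p = count_from A 0 p).
  { induction k as [|k IH]; [reflexivity|].
    now rewrite Nat2Z.inj_succ, <- Z.add_1_r, count_from_periodic_succ. }
  assert (Hneg : forall k, count_from A (- Z.of_nat k) p = count_from A 0 p).
  { induction k as [|k IH]; [reflexivity|].
    rewrite <- IH, <- count_from_periodic_succ. f_equal; lia. }
  destruct (Z_le_gt_dec 0 a).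
  - rewrite <- (Hpos (Z.to_nat a)). f_equal; lia.
  - rewrite <- (Hneg (Z.to_nat (- a))). f_equal; lia.
Qed.

Lemma count_from_periodic_windows q a :
  count_from A a (q * p) = (q * count_from A 0 p)%nat.
Proof.
  revert a; induction q as [|q IH]; intros a; [reflexivity|].
  replace (S q * p)%nat with (p + q * p)%nat by lia.
  rewrite count_from_add, IH, count_from_periodic. lia.
Qed.

End Periodic.

Lemma is_lim_seq_div_odd (c : R) : is_lim_seq (fun N => c / INR (2 * N + 1)) 0.
Proof.
  assert (Hinf : is_lim_seq (fun N => INR (2 * N + 1)) p_infty).
  { apply is_lim_seq_le_p_loc with (u := INR); [|exact is_lim_seq_INR].
    exists 0%nat; intros N _; apply le_INR; lia. }
  pose proof (is_lim_seq_scal_l _ c _ (is_lim_seq_inv _ _ Hinf ltac:(discriminate))) as Hlim.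
  cbn in Hlim. rewrite Rmult_0_r in Hlim. exact Hlim.
Qed.

Lemma is_lim_seq_const_plus_div_odd (l K : R) :
  is_lim_seq (fun N => l + K / INR (2 * N + 1)) l.
Proof.
  pose proof (is_lim_seq_plus' _ _ _ _ (is_lim_seq_const l) (is_lim_seq_div_odd K)) as Hlim.
  rewrite Rplus_0_r in Hlim. exact Hlim.
Qed.

Lemma LimSup_le_of_upper (u : nat -> R) (l K : R) :
  (forall N, u N <= l + K / INR (2 * N + 1)) -> Rbar_le (LimSup_seq u) l.
Proof.
  intros Hup.
  rewrite <- (is_LimSup_seq_unique _ _ (is_lim_LimSup_seq _ _ (is_lim_seq_const_plus_div_odd l K))).
  apply LimSup_le. exists 0%nat. intros N _. apply Hup.
Qed.

Lemma LimSup_squeeze (u : nat -> R) (l K : R) :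
  (forall N, l - K / INR (2 * N + 1) <= u N <= l + K / INR (2 * N + 1)) ->
  LimSup_seq u = l.
Proof.
  intros Hu. apply is_LimSup_seq_unique, is_lim_LimSup_seq.
  apply is_lim_seq_le_le with (u := fun N => l + - K / INR (2 * N + 1))
    (w := fun N => l + K / INR (2 * N + 1)).
  - intros N. specialize (Hu N). unfold Rdiv in *. lra.
  - apply is_lim_seq_const_plus_div_odd.
  - apply is_lim_seq_const_plus_div_odd.
Qed.

Lemma ratio_le_of_mul_le (k c m p : nat) : (0 < p)%nat -> (0 < m)%nat ->
  (p * k <= c * m + p * p)%nat -> INR k / INR m <= INR c / INR p + INR p / INR m.
Proof.
  intros Hp Hm Hk. apply le_INR in Hk. rewrite plus_INR, !mult_INR in Hk.
  apply lt_0_INR in Hp; apply lt_0_INR in Hm.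
  apply Rmult_le_reg_r with (INR p * INR m); [apply Rmult_lt_0_compat; lra|].
  replace (INR k / INR m * (INR p * INR m)) with (INR p * INR k) by (field; lra).
  replace ((INR c / INR p + INR p / INR m) * (INR p * INR m))
    with (INR c * INR m + INR p * INR p) by (field; lra).
  exact Hk.
Qed.

Lemma ratio_ge_of_mul_le (k c m p : nat) : (0 < p)%nat -> (0 < m)%nat ->
  (c * m <= p * k + p * p)%nat -> INR c / INR p - INR p / INR m <= INR k / INR m.
Proof.
  intros Hp Hm Hk. apply le_INR in Hk. rewrite plus_INR, !mult_INR in Hk.
  apply lt_0_INR in Hp; apply lt_0_INR in Hm.
  apply Rmult_le_reg_r with (INR p * INR m); [apply Rmult_lt_0_compat; lra|].
  replace (INR k / INR m * (INR p * INR m)) with (INR p * INR k) by (field; lra).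
  replace ((INR c / INR p - INR p / INR m) * (INR p * INR m))
    with (INR c * INR m - INR p * INR p) by (field; lra).
  lra.
Qed.

Lemma density_le_of_window_le A p c : (0 < p)%nat ->
  (forall a, (count_from A a p <= c)%nat) -> Rbar_le (density A) (INR c / INR p).
Proof.
  intros Hp Hwin. apply LimSup_le_of_upper with (K := INR p). intros N.
  apply ratio_le_of_mul_le; [lia | lia |].
  rewrite count_in_count_from.
  set (m := (2 * N + 1)%nat).
  pose proof (Nat.div_mod_eq m p). pose proof (Nat.mod_upper_bound m p ltac:(lia)).
  pose proof (count_from_windows_le A p c Hwin (m / p) (m mod p) (- Z.of_nat N)).
  replace (m / p * p + m mod p)%nat with m in * by lia.
  nia.
Qed.

Lemma density_periodic A p : (0 < p)%nat -> (forall x, A (x + Z.of_nat p)%Z <-> A x) ->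
  density A = INR (count_from A 0 p) / INR p.
Proof.
  intros Hp Hper. apply LimSup_squeeze with (K := INR p). intros N.
  rewrite count_in_count_from.
  set (m := (2 * N + 1)%nat). set (c := count_from A 0 p).
  pose proof (Nat.div_mod_eq m p). pose proof (Nat.mod_upper_bound m p ltac:(lia)).
  assert (Hsplit : count_from A (- Z.of_nat N) m = (m / p * c +
    count_from A (- Z.of_nat N + Z.of_nat (m / p * p)) (m mod p))%nat).
  { replace m with (m / p * p + m mod p)%nat at 1 by lia.
    now rewrite count_from_add, (count_from_periodic_windows A p Hper). }
  pose proof (count_from_le A (- Z.of_nat N + Z.of_nat (m / p * p)) (m mod p)).
  pose proof (count_from_le A 0 p : (c <= p)%nat).
  split; [apply ratio_ge_of_mul_le | apply ratio_le_of_mul_le]; try lia; nia.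
Qed.

Lemma density_le_of_independent n A : (2 <= n)%nat ->
  independent (1%Z :: 3%Z :: (2 * Z.of_nat n)%Z :: nil) A ->
  Rbar_le (density A) (INR n / INR (2 * n + 3)).
Proof.
  intros Hn HA. apply density_le_of_window_le; [lia|].
  apply count_window; [exact Hn | ..];
    apply (independent_avoids _ _ _ HA); cbn [In]; auto; lia.
Qed.

Definition alternating_blocks (n : nat) (x : Z) : Prop :=
  ((x mod (2 * Z.of_nat n + 3)) mod 2 = 0 /\ x mod (2 * Z.of_nat n + 3) <= 2 * Z.of_nat n - 2)%Z.

Lemma alternating_blocks_independent n : (2 <= n)%nat ->
  independent (1%Z :: 3%Z :: (2 * Z.of_nat n)%Z :: nil) (alternating_blocks n).
Proof.
  intros Hn x y [Hx_even Hx_le] [Hy_even Hy_le] Hdist. cbn [In] in Hdist.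
  set (p := (2 * Z.of_nat n + 3)%Z) in *.
  pose proof (Z.div_mod x p ltac:(lia)). pose proof (Z.mod_pos_bound x p ltac:(lia)).
  pose proof (Z.div_mod y p ltac:(lia)). pose proof (Z.mod_pos_bound y p ltac:(lia)).
  pose proof (Z.div_mod (x mod p) 2 ltac:(lia)). pose proof (Z.div_mod (y mod p) 2 ltac:(lia)).
  set (k := (x / p - y / p)%Z).
  assert (Hk : (k = 0 \/ k = 1 \/ k = -1 \/ 2 <= k \/ k <= -2)%Z) by lia.
  assert (Hpk : (x - y = p * k + 2 * ((x mod p) / 2 - (y mod p) / 2))%Z) by (unfold k; lia).
  assert (Hpk_bound : ((2 <= k -> 2 * p <= p * k) /\ (k <= -2 -> p * k <= -2 * p))%Z) by nia.
  clearbody k. destruct Hk as [ -> | [ -> | [ -> | ]]]; lia.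
Qed.

Lemma alternating_blocks_periodic n x :
  alternating_blocks n (x + Z.of_nat (2 * n + 3))%Z <-> alternating_blocks n x.
Proof.
  unfold alternating_blocks.
  replace (x + Z.of_nat (2 * n + 3))%Z with (x + 1 * (2 * Z.of_nat n + 3))%Z by lia.
  rewrite Z.mod_add by lia. tauto.
Qed.

Lemma alternating_blocks_small n x : (0 <= x < 2 * Z.of_nat n + 3)%Z ->
  alternating_blocks n x <-> (x mod 2 = 0 /\ x <= 2 * Z.of_nat n - 2)%Z.
Proof. intros Hx. unfold alternating_blocks. now rewrite (Z.mod_small x). Qed.

Lemma count_alternating_blocks_prefix n j : (j <= n)%nat ->
  count_from (alternating_blocks n) 0 (2 * j) = j.
Proof.
  induction j as [|j IH]; intros Hj; [reflexivity|].
  replace (2 * S j)%nat with (2 * j + 2)%nat by lia.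
  rewrite count_from_add, IH by lia. cbn [count_from].
  rewrite (indicator_in (alternating_blocks n)), (indicator_notin (alternating_blocks n)).
  - lia.
  - rewrite alternating_blocks_small by lia. intros [Hodd _]. Z.div_mod_to_equations; lia.
  - apply alternating_blocks_small; [lia|]. split; [Z.div_mod_to_equations|]; lia.
Qed.

Lemma count_alternating_blocks n : (2 <= n)%nat ->
  count_from (alternating_blocks n) 0 (2 * n + 3) = n.
Proof.
  intros Hn. rewrite count_from_add, count_alternating_blocks_prefix by lia. cbn [count_from].
  rewrite !(indicator_notin (alternating_blocks n)); try lia;
    rewrite alternating_blocks_small by lia; lia.
Qed.

Lemma density_alternating_blocks n : (2 <= n)%nat ->
  density (alternating_blocks n) = INR n / INR (2 * n + 3).
Proof.
  intros Hn. rewrite (density_periodic _ (2 * n + 3)); [| lia | apply alternating_blocks_periodic].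
  now rewrite count_alternating_blocks.
Qed.

Theorem theorem27 (i : Z) (hi : (2 <= i)%Z) :
  indep_ratio (1%Z :: 3%Z :: (2 * i)%Z :: nil) = Finite (IZR i / IZR (2 * i + 3)).
Proof.
  set (n := Z.to_nat i).
  assert (Hn : (2 <= n)%nat) by lia.
  replace i with (Z.of_nat n) by lia.
  replace (IZR (Z.of_nat n) / IZR (2 * Z.of_nat n + 3)) with (INR n / INR (2 * n + 3))
    by (rewrite !INR_IZR_INZ; do 3 f_equal; lia).
  apply is_lub_Rbar_unique. split.
  - intros r [A [HA Hdens]]. rewrite <- Hdens. exact (density_le_of_independent n A Hn HA).
  - intros b Hb. apply Hb. exists (alternating_blocks n).
    split; [apply alternating_blocks_independent | apply density_alternating_blocks]; exact Hn.
Qed.
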